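(* Let $n,m\in\mathbb{N}$, let $f:\mathbb{F}_2^n\to\mathbb{F}_2$ be $m$-bent, and let $h(\mathbf{x})=\mathbf{x}\cdot\mathbf{y}$ for some $\mathbf{y}\in\mathbb{F}_2^n$. When the three-query algorithm $A^{(m)3,3}_n(h,f,f)$ is executed, the probability of measuring the all-zero state $\ket{0^n}$ is nonzero if $\mathbf{y}=0^n$ (i.e. $h$ is the zero function) and is zero if $\mathbf{y}\neq 0^n$ (i.e. $h$ is balanced).
   Context: $\zeta_m=e^{2\pi i/m}$, $\overline{\zeta_m}$ its conjugate; $wt$ is Hamming weight; $\mathbf{x}\cdot\mathbf{y}=\bigoplus_i x_iy_i$. $f$ is $m$-bent if $|\mathcal{H}^{(m)}_f(\boldsymbol{\omega})|=1$ for all $\boldsymbol{\omega}$, where $\mathcal{H}^{(m)}_f(\boldsymbol{\omega})=2^{-n/2}\sum_{\mathbf{x}}(-1)^{f(\mathbf{x})\oplus\mathbf{x}\cdot\boldsymbol{\omega}}\zeta_m^{wt(\mathbf{x})}$. Gates: $\mathrm{H}$ Hadamard; $\Omega_m=\frac{1}{\sqrt2}\begin{pmatrix}1&\zeta_m\\1&-\zeta_m\end{pmatrix}$; $\overline{\Omega}_m=\frac{1}{\sqrt2}\begin{pmatrix}1&\overline{\zeta_m}\\1&-\overline{\zeta_m}\end{pmatrix}$; $U_f$ is the phase oracle $\ket{\mathbf{x}}\mapsto(-1)^{f(\mathbf{x})}\ket{\mathbf{x}}$. Algorithm $A^{(m)3,3}_n(f_1,f_2,f_3)$: from $\ket{0^n}$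 apply in order $\mathrm{H}^{\otimes n}$, $U_{f_2}$, $\Omega_m^{\otimes n}$, $U_{f_1}$, $\mathrm{H}^{\otimes n}$, $U_{f_3}$, $\overline{\Omega}_m^{\otimes n}$, then measure all qubits. *)

From HB Require Import structures.
From mathcomp Require Import all_boot all_order all_algebra.
From mathcomp Require Import reals trigo.
From mathcomp Require Import complex.
Set Implicit Arguments. Unset Strict Implicit. Unset Printing Implicit Defensive.
Import Order.TTheory GRing.Theory Num.Theory.
Local Open Scope ring_scope.
Local Open Scope complex_scope.

Notation bits n := {ffun 'I_n -> bool}.

Definition zero_bits (n : nat) : bits n := [ffun=> false].

Definition dotb (n : nat) (x y : bits n) : bool :=
  \big[addb/false]_(i < n) (x i && y i).

Definition wt (n : nat) (x : bits n) : nat := \sum_(i < n) (x i : nat).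

Definition sgnC (R : realType) (b : bool) : R[i] := (-1) ^+ b.

Definition zeta (R : realType) (m : nat) : R[i] :=
  (cos (2 * pi / m%:R))%:C + 'i * (sin (2 * pi / m%:R))%:C.

Definition invsqrt2 (R : realType) : R[i] := (Num.sqrt (2 : R))^-1%:C.

Definition Hm (R : realType) (n m : nat) (f : bits n -> bool) (w : bits n) : R[i] :=
  invsqrt2 R ^+ n *
  \sum_(x : bits n) sgnC R (f x (+) dotb x w) * zeta R m ^+ wt x.

Definition mbent (R : realType) (n m : nat) (f : bits n -> bool) : Prop :=
  forall w : bits n, `|Hm R m f w| = 1.

Definition state (R : realType) (n : nat) := bits n -> R[i].

(* single-qubit gate given by its 2x2 matrix g out_bit in_bit *)
Definition gate (R : realType) := bool -> bool -> R[i].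

Definition apply_tensor (R : realType) (n : nat) (g : gate R) (psi : state R n)
  : state R n :=
  fun x => \sum_(y : bits n) (\prod_(i < n) g (x i) (y i)) * psi y.

Definition apply_oracle (R : realType) (n : nat) (f : bits n -> bool) (psi : state R n)
  : state R n := fun x => sgnC R (f x) * psi x.

Definition ket0 (R : realType) (n : nat) : state R n :=
  fun x => if x == zero_bits n then 1 else 0.

Definition hadamard (R : realType) : gate R :=
  fun a b => invsqrt2 R * sgnC R (a && b).

(* Omega_m = 1/sqrt2 [[1, z],[1, -z]] *)
Definition omega (R : realType) (m : nat) : gate R :=
  fun a b => invsqrt2 R * (if b then sgnC R a * zeta R m else 1).

(* conjugate Omega_m = 1/sqrt2 [[1, conj z],[1, -conj z]] *)
Definition omega_bar (R : realType) (m : nat) : gate R :=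
  fun a b => invsqrt2 R * (if b then sgnC R a * (zeta R m)^* else 1).

Definition A33_state (R : realType) (n m : nat) (f1 f2 f3 : bits n -> bool)
  : state R n :=
  apply_tensor (omega_bar R m)
  (apply_oracle f3
  (apply_tensor (hadamard R)
  (apply_oracle f1
  (apply_tensor (omega R m)
  (apply_oracle f2
  (apply_tensor (hadamard R) (@ket0 R n))))))).

Definition prob_outcome (R : realType) (n m : nat) (f1 f2 f3 : bits n -> bool)
  (x : bits n) : R[i] :=
  `|A33_state R m f1 f2 f3 x| ^+ 2.

(* All three gates have the form 2^(-1/2) [[1, z], [1, -z]], so a tensor power maps
   |y> to 2^(-n/2) sum_x (-1)^(x.y) z^wt(y) |x>.  Hence after H^n |0^n>, U_f and
   Omega_m^n the register holds 2^(-n/2) H_f(w) on |w>, and the last three layers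
   U_f, H^n, conj(Omega_m)^n read off the amplitude of |0^n> against the complex
   conjugate of H_f: for any f it equals 2^(-n) sum_w (-1)^(w.y) |H_f(w)|^2.
   For m-bent f every |H_f(w)|^2 is 1, leaving the character sum
   2^(-n) sum_w (-1)^(w.y), which is 1 for y = 0 and 0 otherwise. *)
From HB Require Import structures.
From mathcomp Require Import all_boot all_order all_algebra.
From mathcomp Require Import reals trigo.
From mathcomp Require Import complex.
From mathcomp Require Import ring.
Set Implicit Arguments. Unset Strict Implicit. Unset Printing Implicit Defensive.
Import Order.TTheory GRing.Theory Num.Theory.
Local Open Scope ring_scope.

Section QueryAlgorithm.
Variable R : realType.
Local Notation C := (R[i]).
Local Notation c := (invsqrt2 R).

Lemma sgnC_addb (a b : bool) : sgnC R (a (+) b) = sgnC R a * sgnC R b.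
Proof. by case: a; case: b; rewrite /sgnC /= ?expr0 ?expr1 ?mul1r ?mulrNN ?mulr1. Qed.

Lemma sgnC_negb (a : bool) : sgnC R (~~ a) = - sgnC R a.
Proof. by case: a; rewrite /sgnC /= ?expr0 ?expr1 ?opprK. Qed.

Lemma conjc_sgnC (a : bool) : conjc (sgnC R a) = sgnC R a.
Proof. by rewrite /sgnC rmorphXn rmorphN1. Qed.

Lemma sqr_normc (z : C) : `|z| ^+ 2 = z * conjc z.
Proof. exact: normCK. Qed.

Lemma conjc_invsqrt2 : conjc c = c.
Proof. by rewrite /invsqrt2 conjc_real. Qed.

Lemma invsqrt2_neq0 : c != 0.
Proof.
rewrite /invsqrt2 -complexr0 eq_complex /= eqxx andbT invr_eq0.
by rewrite sqrtr_eq0 -ltNge.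
Qed.

Lemma dotbC n (x y : bits n) : dotb x y = dotb y x.
Proof. by apply: eq_bigr => i _; rewrite andbC. Qed.

Lemma dotb0 n (x : bits n) : dotb x (zero_bits n) = false.
Proof. by rewrite /dotb big1 // => i _; rewrite ffunE andbF. Qed.

Lemma wt0 n : wt (zero_bits n) = 0%N.
Proof. by rewrite /wt big1 // => i _; rewrite ffunE. Qed.

Lemma prod_sgnC_andb n (x y : bits n) :
  \prod_(i < n) sgnC R (x i && y i) = sgnC R (dotb x y).
Proof. by rewrite /dotb (big_morph (sgnC R) sgnC_addb (erefl (sgnC R false))). Qed.

Lemma prod_expr_wt n (z : C) (y : bits n) : \prod_(i < n) z ^+ y i = z ^+ wt y.
Proof. by rewrite /wt (big_morph (fun k => z ^+ k) (exprD z) (expr0 z)). Qed.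

Lemma sum_sgnC_dotb n (y : bits n) :
  \sum_(w : bits n) sgnC R (dotb w y) = if y == zero_bits n then (2 ^ n)%:R else 0.
Proof.
case: eqP => [->|/eqP y_neq0].
  under eq_bigr => w _ do rewrite dotb0 /sgnC expr0.
  by rewrite sumr_const card_ffun card_bool card_ord.
have [i yi] : exists i, y i.
  apply/existsP; apply: contraR y_neq0; rewrite negb_exists => /forallP y_false.
  by apply/eqP/ffunP => j; rewrite ffunE; apply/negbTE/y_false.
(* flipping the bit i, where y_i = 1, is an involution that negates every term *)
pose flip (w : bits n) : bits n := [ffun j => if j == i then ~~ w j else w j].
have flipK : involutive flip.
  by move=> w; apply/ffunP => j; rewrite !ffunE; case: eqP => // _; rewrite negbK.
have dotb_flip w : dotb (flip w) y = ~~ dotb w y.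
  rewrite /dotb (bigD1 i) //= [in RHS](bigD1 i) //= !ffunE eqxx yi !andbT.
  rewrite negb_add; congr (_ (+) _); apply: eq_bigr => j /negbTE ji.
  by rewrite ffunE ji.
set S := \sum_w _; have /eqP : S = - S.
  rewrite {1}/S (reindex_inj (can_inj flipK)) /= -sumrN.
  by apply: eq_bigr => w _; rewrite dotb_flip sgnC_negb.
by rewrite -addr_eq0 -mulr2n mulrn_eq0 /= => /eqP.
Qed.

Definition phase_gate (z : C) : gate R :=
  fun a b => c * (sgnC R (a && b) * z ^+ b).

Lemma hadamard_phase : hadamard R =2 phase_gate 1.
Proof. by move=> a b; rewrite /phase_gate expr1n mulr1. Qed.

Lemma omega_phase m : omega R m =2 phase_gate (zeta R m).
Proof. by move=> a [|]; rewrite /omega /phase_gate /sgnC /= ?andbT ?andbF ?mulr1. Qed.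

Lemma omega_bar_phase m : omega_bar R m =2 phase_gate (conjc (zeta R m)).
Proof. by move=> a [|]; rewrite /omega_bar /phase_gate /sgnC /= ?andbT ?andbF ?mulr1. Qed.

Lemma apply_tensor_phase n (g : gate R) (z : C) (psi : state R n) x :
  g =2 phase_gate z ->
  apply_tensor g psi x = \sum_y c ^+ n * (sgnC R (dotb x y) * z ^+ wt y) * psi y.
Proof.
move=> gE; apply: eq_bigr => y _; congr (_ * _).
under eq_bigr => i _ do rewrite gE.
by rewrite big_split /= prodr_const card_ord big_split /= prod_sgnC_andb prod_expr_wt.
Qed.

Lemma hadamard_ket0 n x : apply_tensor (hadamard R) (@ket0 R n) x = c ^+ n.
Proof.
rewrite (apply_tensor_phase _ _ hadamard_phase) (bigD1 (zero_bits n)) //=.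
rewrite big1 => [|y /negbTE y_neq0]; last by rewrite /ket0 y_neq0 mulr0.
by rewrite /ket0 eqxx dotb0 wt0 /sgnC !expr0 !mulr1 addr0.
Qed.

Lemma omega_oracle_hadamard_ket0 n m (f : bits n -> bool) w :
  apply_tensor (omega R m) (apply_oracle f (apply_tensor (hadamard R) (@ket0 R n))) w
  = c ^+ n * Hm R m f w.
Proof.
rewrite (apply_tensor_phase _ _ (omega_phase m)) /Hm !mulr_sumr.
apply: eq_bigr => x _; rewrite /apply_oracle hadamard_ket0 sgnC_addb dotbC; ring.
Qed.

Lemma conjc_Hm n m (f : bits n -> bool) w :
  conjc (Hm R m f w) =
  c ^+ n * \sum_x sgnC R (f x) * sgnC R (dotb x w) * conjc (zeta R m) ^+ wt x.
Proof.
rewrite /Hm rmorphM rmorphXn rmorph_sum; congr (_ * _).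
  by congr (_ ^+ _); exact: conjc_invsqrt2.
apply: eq_bigr => x _; rewrite rmorphM -sgnC_addb; congr (_ * _).
  exact: conjc_sgnC.
exact: rmorphXn.
Qed.

Lemma A33_state_zero_bits n m (f : bits n -> bool) (y : bits n) :
  A33_state R m (fun x => dotb x y) f f (zero_bits n) =
  c ^+ n * c ^+ n * \sum_w sgnC R (dotb w y) * `|Hm R m f w| ^+ 2.
Proof.
rewrite mulr_sumr; under [RHS]eq_bigr => w _ do rewrite sqr_normc conjc_Hm !mulr_sumr.
rewrite exchange_big /A33_state.
rewrite (apply_tensor_phase _ _ (omega_bar_phase m)); apply: eq_bigr => x _.
rewrite {1}/apply_oracle (apply_tensor_phase _ _ hadamard_phase) !mulr_sumr.
apply: eq_bigr => w _.
rewrite /apply_oracle omega_oracle_hadamard_ket0 dotbC dotb0 /sgnC expr0 expr1n.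
ring.
Qed.

End QueryAlgorithm.

Theorem corollary3 (R : realType) (n m : nat) (hm : (0 < m)%N)
  (f : bits n -> bool) (hf : mbent R m f) (y : bits n) :
  let h := fun x : bits n => dotb x y in
  (y = zero_bits n -> prob_outcome R m h f f (zero_bits n) != 0) /\
  (y <> zero_bits n -> prob_outcome R m h f f (zero_bits n) = 0).
Proof.
move=> h; rewrite /prob_outcome /h A33_state_zero_bits.
under eq_bigr => w _ do rewrite hf expr1n mulr1.
rewrite sum_sgnC_dotb; split => [->|/eqP/negbTE ->]; last first.
  by rewrite mulr0 normr0 expr0n.
rewrite eqxx sqrf_eq0 normr_eq0 !mulf_eq0 !expf_eq0 (negbTE (@invsqrt2_neq0 R)).
by rewrite pnatr_eq0 expn_eq0 !andbF.
Qed.
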